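(* Fix a dimension $d\ge 1$ and call permutations achievable with respect to $d$-dimensional boxes. (1) If $p_1\in S_n$ and $p_2\in S_k$ are achievable, then the permutation in $S_{n+k}$ whose one-line notation is $p_1(1)\cdots p_1(n)\,(p_2(1)+n)\cdots(p_2(k)+n)$ is achievable. (2) If $p\in S_n$ is achievable and $x\in\{1,\dots,n\}$, then the permutation in $S_{n+1}$ obtained from the one-line notation of $p$ by replacing the entry $x$ with the two consecutive entries $x,\,x+1$ and increasing every other entry greater than $x$ by $1$ is achievable. (3) If $p$ is achievable, then so is its inverse $p^{-1}$.
   Context: A $d$-dimensional box $A$ has closed side lengths $a_1\le\dots\le a_d$ (positive reals). A state of $A$ is either closed or expanded along one side $i$: $a_i$ is replaced by $a_i'$ with $a_i\le a_i'\le 2a_i$, other sides unchanged (only one side can expand). The dimension vector of a state is its side lengths sorted non-decreasingly. A box in some state fits inside another box in some state if each coordinate of the outer one's dimension vector is strictly larger than the corresponding coordinate of the inner one's. An order $X_1,\dots,X_m$ (innermost to outermost) of boxes is a possible arrangement if each box can be given a state so that $X_j$ fits inside $X_{j+1}$ for all $j$; states may differ between arrangements. A permutation $p\in S_m$, written in one-line notation $p(1)p(2)\cdots p(m)$, is achievable if there exist $d$-dimensional boxes $B_1,\dots,B_m$ such that both the natural order $B_1,B_2,\dots,B_m$ and the order $B_{p(1)},B_{p(2)},\dots,B_{p(m)}$ (innermost to outermost) are possible arrangements. *)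

From HB Require Import structures.
From mathcomp Require Import all_boot all_order all_algebra all_fingroup.
From mathcomp Require Import reals.
Set Implicit Arguments. Unset Strict Implicit. Unset Printing Implicit Defensive.
Import Order.TTheory GRing.Theory Num.Theory.
Local Open Scope ring_scope.

Section Boxes.
Variables (R : realType) (d : nat).

(* A box (or a state of a box) is given by its side lengths, indexed by 'I_d. *)
Definition box := 'I_d -> R.

Definition valid_box (a : box) : Prop := forall i, 0 < a i.

Definition is_state (a s : box) : Prop :=
  s = a \/
  exists i : 'I_d, [/\ a i <= s i, s i <= 2 * a i & forall j, j != i -> s j = a j].

Definition dimvec (s : box) : seq R := sort <=%R [seq s k | k : 'I_d].

Definition fits (s t : box) : Prop :=
  forall k : 'I_d, nth 0 (dimvec s) k < nth 0 (dimvec t) k.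

(* X 0, X 1, ..., X (m-1) (innermost to outermost) is a possible arrangement *)
Definition possible_arrangement (m : nat) (X : 'I_m -> box) : Prop :=
  exists S : 'I_m -> box,
    (forall j, is_state (X j) (S j)) /\
    (forall j k : 'I_m, (k : nat) = j.+1 -> fits (S j) (S k)).

(* p (0-indexed, p j is the (j+1)-th entry of the one-line notation) *)
Definition achievable (m : nat) (p : 'S_m) : Prop :=
  exists B : 'I_m -> box,
    (forall i, valid_box (B i)) /\
    possible_arrangement B /\
    possible_arrangement (fun j => B (p j)).

End Boxes.

(* Scaling every box by a factor c > 0 scales its states and preserves fitting.
   (1) Append to the boxes realizing p1 the boxes realizing p2, scaled so that
   each side of the latter exceeds twice every side of the former: then every
   state of a new box contains every state of an old one, so both arrangements
   concatenate.  (2) Replace the box B_x by the two boxes c B_x and B_x with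
   c < 1: the state c S_x fits in S_x, and if c is close enough to 1 the state
   preceding S_x still fits in c S_x, in both arrangements at once.
   (3) The boxes B_(p i) realize p^-1. *)

From HB Require Import structures.
From mathcomp Require Import all_boot all_order all_algebra all_fingroup.
From mathcomp Require Import reals.
From mathcomp Require Import zify.
Set Implicit Arguments. Unset Strict Implicit. Unset Printing Implicit Defensive.
Import Order.TTheory GRing.Theory Num.Theory.
Local Open Scope ring_scope.

Section FiniteBounds.
Variable R : realType.

Lemma finite_ub (T : finType) (f : T -> R) : exists2 M, 0 < M & forall x, f x < M.
Proof.
have sum_ge0 (P : pred T) : 0 <= \sum_(x | P x) `|f x| by exact: sumr_ge0.
exists (\sum_x `|f x| + 1); first by rewrite ltr_wpDl.
move=> x; rewrite (bigD1 x) //= -addrA.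
by apply: le_lt_trans (ler_norm (f x)) _; rewrite ltrDl ltr_wpDl.
Qed.

Lemma finite_pos_lb (T : finType) (f : T -> R) : (forall x, 0 < f x) ->
  exists2 e, 0 < e & forall x, e < f x.
Proof.
move=> f_gt0; have [M M_gt0 ltM] := finite_ub (fun x => (f x)^-1).
exists M^-1; first by rewrite invr_gt0.
by move=> x; rewrite -(invrK (f x)) ltf_pV2 ?posrE ?invr_gt0.
Qed.

Lemma exists_scale_gt (T U : finType) (f : T -> R) (g : U -> R) :
  (forall y, 0 < g y) -> exists2 c, 0 < c & forall x y, f x < c * g y.
Proof.
move=> g_gt0; have [M M_gt0 ltM] := finite_ub f.
have [e e_gt0 lte] := finite_pos_lb g_gt0.
exists (M / e) => [|x y]; first by rewrite divr_gt0.
apply: lt_trans (ltM x) _.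
by rewrite -mulrA ltr_pMr // ltr_pdivlMl // mulr1.
Qed.
End FiniteBounds.

Section Boxes.
Variables (R : realType) (d : nat).
Implicit Types (a b s t : box R d) (c : R).

Definition scale_box c s : box R d := fun k => c * s k.

Definition fits_chain m (S : 'I_m -> box R d) : Prop :=
  forall j k : 'I_m, (k : nat) = j.+1 -> fits (S j) (S k).

Lemma size_dimvec s : size (dimvec s) = d.
Proof. by rewrite size_sort size_map size_enum_ord. Qed.

Lemma nth_dimvec_side s (k : 'I_d) : exists i, nth 0 (dimvec s) k = s i.
Proof.
have : nth 0 (dimvec s) k \in dimvec s by rewrite mem_nth ?size_dimvec.
by rewrite mem_sort => /mapP [i _ ->]; exists i.
Qed.

Lemma dimvec_scale c s : 0 < c -> dimvec (scale_box c s) = map ( *%R c) (dimvec s).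
Proof.
move=> c_gt0; apply: (@sorted_eq _ <=%R le_trans le_anti).
- exact: sort_le_sorted.
- rewrite sorted_map (@eq_sorted _ _ <=%R) ?sort_le_sorted // => x y.
  by rewrite /= ler_pM2l.
- rewrite perm_sort perm_sym.
  have -> : [seq scale_box c s k | k : 'I_d] = map ( *%R c) [seq s k | k : 'I_d].
    by rewrite -map_comp.
  exact/perm_map/permEl/perm_sort.
Qed.

Lemma nth_dimvec_scale c s (k : 'I_d) : 0 < c ->
  nth 0 (dimvec (scale_box c s)) k = c * nth 0 (dimvec s) k.
Proof. by move=> c_gt0; rewrite dimvec_scale // (nth_map 0) ?size_dimvec. Qed.

Lemma fits_scale c s t : 0 < c -> fits s t -> fits (scale_box c s) (scale_box c t).
Proof. by move=> c_gt0 st k; rewrite !nth_dimvec_scale // ltr_pM2l. Qed.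

Lemma fits_all_lt s t : (forall i j, s i < t j) -> fits s t.
Proof.
move=> lt_st k.
by have [i ->] := nth_dimvec_side s k; have [j ->] := nth_dimvec_side t k.
Qed.

Lemma fits_scale_lt1 c s : 0 < c < 1 -> valid_box s -> fits (scale_box c s) s.
Proof.
move=> /andP [c_gt0 c_lt1] s_gt0 k; rewrite nth_dimvec_scale //.
by have [i ->] := nth_dimvec_side s k; rewrite gtr_pMl.
Qed.

Lemma fits_scale_near1 s t : fits s t -> valid_box t ->
  exists2 l, 0 < l < 1 & forall mu, l <= mu -> fits s (scale_box mu t).
Proof.
move=> st t_gt0.
have dt_gt0 (k : 'I_d) : 0 < nth 0 (dimvec t) k.
  by have [i ->] := nth_dimvec_side t k.
have gap_gt0 (k : 'I_d) : 0 < 1 - nth 0 (dimvec s) k / nth 0 (dimvec t) k.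
  by rewrite subr_gt0 ltr_pdivrMr // mul1r.
have [e e_gt0 lt_e] := finite_pos_lb gap_gt0.
pose l := Num.max (1 - e) 2^-1.
have l_gt0 : 0 < l by rewrite lt_max invr_gt0 ltr0n orbT.
exists l => [|mu l_le_mu k].
  by rewrite l_gt0 gt_max ltrBlDr ltrDl e_gt0 invf_lt1 ?ltr1n.
have mu_gt0 : 0 < mu := lt_le_trans l_gt0 l_le_mu.
have le_mu : 1 - e <= mu by apply: le_trans l_le_mu; rewrite le_max lexx.
rewrite nth_dimvec_scale // -ltr_pdivrMr //; apply: lt_le_trans le_mu.
by rewrite ltrBrDl -ltrBrDr; exact: lt_e.
Qed.

Lemma state_ge a s : is_state a s -> forall k, a k <= s k.
Proof.
case=> [-> k|[i [ge_i _ eq_a]] k]; first exact: lexx.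
by have [-> //|ki] := eqVneq k i; rewrite eq_a ?lexx.
Qed.

Lemma state_le2 a s : valid_box a -> is_state a s -> forall k, s k <= 2 * a k.
Proof.
move=> a_gt0 s_a k; have le_a2 : a k <= 2 * a k by rewrite ler_pMl ?ler1n.
case: s_a => [-> //|[i [_ le_i eq_a]]].
by have [-> //|ki] := eqVneq k i; rewrite eq_a.
Qed.

Lemma state_valid a s : valid_box a -> is_state a s -> valid_box s.
Proof. by move=> a_gt0 s_a k; apply: lt_le_trans (a_gt0 k) (state_ge s_a k). Qed.

Lemma valid_scale c a : 0 < c -> valid_box a -> valid_box (scale_box c a).
Proof. by move=> c_gt0 a_gt0 k; rewrite mulr_gt0. Qed.

Lemma state_scale c a s : 0 < c -> is_state a s ->
  is_state (scale_box c a) (scale_box c s).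
Proof.
move=> c_gt0 [->|[i [ge_i le_i eq_a]]]; [left | right] => //.
exists i; split=> [||j ji]; rewrite /scale_box.
- by rewrite ler_pM2l.
- by rewrite mulrCA ler_pM2l.
- by rewrite eq_a.
Qed.

Lemma fits_states_double_lt a b s t : valid_box a -> is_state a s -> is_state b t ->
  (forall i j, 2 * a i < b j) -> fits s t.
Proof.
move=> a_gt0 s_a t_b lt_ab; apply: fits_all_lt => i j.
apply: le_lt_trans (state_le2 a_gt0 s_a i) _.
exact: lt_le_trans (lt_ab i j) (state_ge t_b j).
Qed.

Lemma eq_possible_arrangement m (X Y : 'I_m -> box R d) :
  X =1 Y -> possible_arrangement X -> possible_arrangement Y.
Proof. by move=> eXY [S [S_X chainS]]; exists S; split=> // j; rewrite -eXY. Qed.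

Lemma possible_arrangement_scale m c (X : 'I_m -> box R d) : 0 < c ->
  possible_arrangement X -> possible_arrangement (fun j => scale_box c (X j)).
Proof.
move=> c_gt0 [S [S_X chainS]]; exists (fun j => scale_box c (S j)).
by split=> [j|j k jk]; [exact: state_scale | exact/fits_scale/chainS].
Qed.

Definition concat_boxes n k (X : 'I_n -> box R d) (Y : 'I_k -> box R d)
    (i : 'I_(n + k)) : box R d :=
  match split i with inl j => X j | inr j => Y j end.

Lemma possible_arrangement_concat n k (X : 'I_n -> box R d) (Y : 'I_k -> box R d) :
  (forall j, valid_box (X j)) -> (forall j j' i i', 2 * X j i < Y j' i') ->
  possible_arrangement X -> possible_arrangement Y ->
  possible_arrangement (concat_boxes X Y).
Proof.
move=> X_gt0 lt_XY [S [S_X chainS]] [T [T_Y chainT]].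
exists (concat_boxes S T); split=> [i|i i'].
  by rewrite /concat_boxes; case: split.
rewrite /concat_boxes; case: splitP => j ->; case: splitP => j' -> /= e.
- exact: chainS.
- exact: fits_states_double_lt (X_gt0 j) (S_X j) (T_Y j') (lt_XY j j').
- by have := ltn_ord j'; lia.
- by apply: chainT; lia.
Qed.

Lemma concat_boxes_perm n k (p1 : 'S_n) (p2 : 'S_k) (q : 'S_(n + k))
    (X : 'I_n -> box R d) (Y : 'I_k -> box R d) :
  (forall i, q (lshift k i) = lshift k (p1 i)) ->
  (forall j, q (rshift n j) = rshift n (p2 j)) ->
  forall i, concat_boxes X Y (q i) =
            concat_boxes (fun j => X (p1 j)) (fun j => Y (p2 j)) i.
Proof.
move=> q_lo q_hi i; rewrite /concat_boxes -(splitK i).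
case: (split i) => j /=.
- by rewrite q_lo !(unsplitK (inl _ _)).
- by rewrite q_hi !(unsplitK (inr _ _)).
Qed.

(* Position [x] holds the shrunken copy [c * X x] and position [x + 1] the
   box [X x] itself; [unlift] shifts all other positions back to [X]. *)
Definition inflate_boxes n (x : 'I_n) c (X : 'I_n -> box R d) (i : 'I_n.+1) :
    box R d :=
  if unlift (widen_ord (leqnSn n) x) i is Some j then X j else scale_box c (X x).

Lemma fits_pred_scale n (S : 'I_n -> box R d) (x : 'I_n) :
  fits_chain S -> valid_box (S x) ->
  exists2 l, 0 < l < 1 & forall mu, l <= mu ->
    forall j : 'I_n, j.+1 = x -> fits (S j) (scale_box mu (S x)).
Proof.
move=> chainS Sx_gt0; case: (posnP x) => [x0 | x_gt0].
  exists 2^-1 => [|mu _ j]; last by rewrite x0.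
  by rewrite invr_gt0 invf_lt1 ?ltr0n ?ltr1n.
have lt_pred : (x.-1 < n)%N by have := ltn_ord x; lia.
have fits_pred := chainS (Ordinal lt_pred) x (esym (prednK x_gt0)).
have [l l01 fits_l] := fits_scale_near1 fits_pred Sx_gt0.
exists l => // mu le_mu j jx.
by rewrite (_ : j = Ordinal lt_pred); [exact: fits_l | apply: ord_inj => /=; lia].
Qed.

Lemma possible_arrangement_inflate n (x : 'I_n) (X : 'I_n -> box R d) :
  (forall j, valid_box (X j)) -> possible_arrangement X ->
  exists2 l, 0 < l < 1 &
    forall c, l <= c < 1 -> possible_arrangement (inflate_boxes x c X).
Proof.
move=> X_gt0 [S [S_X chainS]].
have S_gt0 j : valid_box (S j) := state_valid (X_gt0 j) (S_X j).
have [l /andP [l_gt0 l_lt1] fits_l] := fits_pred_scale chainS (S_gt0 x).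
exists l => [|c /andP [l_le_c c_lt1]]; first by rewrite l_gt0.
have c_gt0 : 0 < c := lt_le_trans l_gt0 l_le_c.
exists (inflate_boxes x c S); split=> [i|i i'].
  rewrite /inflate_boxes; case: unlift => [j|]; first exact: S_X.
  exact: state_scale.
rewrite /inflate_boxes.
case: unliftP => [j ->|->]; case: unliftP => [j' ->|->] /=; rewrite /bump.
- move=> e; apply: chainS; move: e.
  by case: leqP; case: leqP; rewrite ?add1n ?add0n; lia.
- move=> e; apply: fits_l => //; move: e.
  by case: leqP; rewrite ?add1n ?add0n; lia.
- move=> e; rewrite (_ : j' = x); first by apply: fits_scale_lt1; rewrite ?c_gt0.
  apply: ord_inj; change (@nat_of_ord n j' = x); move: e.
  by case: leqP; rewrite ?add1n ?add0n; lia.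
- lia.
Qed.
End Boxes.

Section InflatePerm.
Variables (n : nat) (p : 'S_n) (x0 pos : 'I_n) (q : 'S_n.+1).
Hypotheses (p_pos : p pos = x0)
  (q_lt : forall i : 'I_n, (i < pos)%N ->
     (q (widen_ord (leqnSn n) i) : nat) = bump x0 (p i))
  (q_pos : (q (widen_ord (leqnSn n) pos) : nat) = x0)
  (q_pos1 : (q (lift ord0 pos) : nat) = x0.+1)
  (q_gt : forall i : 'I_n, (pos < i)%N -> (q (lift ord0 i) : nat) = bump x0 (p i)).

Local Notation x0' := (widen_ord (leqnSn n) x0).
Local Notation pos' := (widen_ord (leqnSn n) pos).

Lemma lift_inflate_perm (k : 'I_n) : q (lift pos' k) = lift x0' (p k).
Proof.
have bump_pos : bump pos k = if (k < pos)%N then k : nat else k.+1.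
  by rewrite /bump; case: leqP => _; rewrite ?add0n ?add1n.
case: (ltngtP k pos) => [k_lt | k_gt | /ord_inj k_eq].
- rewrite (_ : lift pos' k = widen_ord (leqnSn n) k); last first.
    by apply: ord_inj; rewrite /= bump_pos k_lt.
  by apply: ord_inj; rewrite q_lt.
- rewrite (_ : lift pos' k = lift ord0 k); last first.
    by apply: ord_inj; rewrite lift0 /= bump_pos ltnNge ltnW.
  by apply: ord_inj; rewrite q_gt.
- rewrite k_eq p_pos (_ : lift pos' pos = lift ord0 pos); last first.
    by apply: ord_inj; rewrite lift0 /= /bump leqnn add1n.
  by apply: ord_inj; rewrite q_pos1 /= /bump leqnn add1n.
Qed.

Lemma unlift_inflate_perm j : unlift x0' (q j) = omap p (unlift pos' j).
Proof.
case: (unliftP pos' j) => [k -> | ->]; first by rewrite lift_inflate_perm liftK.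
by rewrite (_ : q pos' = x0') ?unlift_none //; apply: ord_inj; rewrite q_pos.
Qed.

Lemma inflate_boxes_perm (R : realType) (d : nat) c (X : 'I_n -> box R d) j :
  inflate_boxes x0 c X (q j) = inflate_boxes pos c (fun i => X (p i)) j.
Proof.
by rewrite /inflate_boxes unlift_inflate_perm; case: unlift => //=; rewrite p_pos.
Qed.

End InflatePerm.

Section Achievable.
Variables (R : realType) (d : nat).

Lemma achievable_concat n k (p1 : 'S_n) (p2 : 'S_k) (q : 'S_(n + k)) :
  achievable R d p1 -> achievable R d p2 ->
  (forall i : 'I_n, q (lshift k i) = lshift k (p1 i)) ->
  (forall j : 'I_k, q (rshift n j) = rshift n (p2 j)) ->
  achievable R d q.
Proof.
move=> [B1 [B1_gt0 [arr1 arr1p]]] [B2 [B2_gt0 [arr2 arr2p]]] q_lo q_hi.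
have [c c_gt0 lt_c] := exists_scale_gt (fun z : 'I_n * 'I_d => 2 * B1 z.1 z.2)
  (fun z : 'I_k * 'I_d => B2_gt0 z.1 z.2).
pose C2 j := scale_box c (B2 j).
have lt_B1C2 j j' i i' : 2 * B1 j i < C2 j' i' := lt_c (j, i) (j', i').
exists (concat_boxes B1 C2); split; [|split].
- move=> i; rewrite /concat_boxes; case: split => j; first exact: B1_gt0.
  exact: valid_scale.
- exact: possible_arrangement_concat B1_gt0 lt_B1C2 arr1
    (possible_arrangement_scale c_gt0 arr2).
- have perm_q i := esym (concat_boxes_perm B1 C2 q_lo q_hi i).
  apply: (eq_possible_arrangement perm_q).
  exact: possible_arrangement_concat (fun j => B1_gt0 (p1 j))
    (fun j j' => lt_B1C2 (p1 j) (p2 j')) arr1p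
    (possible_arrangement_scale c_gt0 arr2p).
Qed.

Lemma achievable_inflate n (p : 'S_n) (x0 pos : 'I_n) (q : 'S_n.+1) :
  achievable R d p -> p pos = x0 ->
  (forall i : 'I_n, (i < pos)%N ->
      (q (widen_ord (leqnSn n) i) : nat) = bump x0 (p i)) ->
  (q (widen_ord (leqnSn n) pos) : nat) = x0 ->
  (q (lift ord0 pos) : nat) = x0.+1 ->
  (forall i : 'I_n, (pos < i)%N -> (q (lift ord0 i) : nat) = bump x0 (p i)) ->
  achievable R d q.
Proof.
move=> [B [B_gt0 [arr arrp]]] p_pos q_lt q_pos q_pos1 q_gt.
have [l1 /andP [l1_gt0 l1_lt1] arr_l1] := possible_arrangement_inflate x0 B_gt0 arr.
have [l2 /andP [_ l2_lt1] arr_l2] :=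
  possible_arrangement_inflate pos (fun j => B_gt0 (p j)) arrp.
pose c := Num.max l1 l2.
have c_gt0 : 0 < c by rewrite lt_max l1_gt0.
have c_lt1 : c < 1 by rewrite gt_max l1_lt1.
exists (inflate_boxes x0 c B); split; [|split].
- move=> i; rewrite /inflate_boxes; case: unlift => [j|]; first exact: B_gt0.
  exact: valid_scale.
- by apply: arr_l1; rewrite le_max lexx.
- apply: (eq_possible_arrangement
    (fun j => esym (inflate_boxes_perm p_pos q_lt q_pos q_pos1 q_gt c B j))).
  by apply: arr_l2; rewrite le_max lexx orbT.
Qed.

Lemma achievable_inv m (p : 'S_m) : achievable R d p -> achievable R d p^-1.
Proof.
move=> [B [B_gt0 [arr arrp]]]; exists (fun i => B (p i)); split=> //.
by split=> //; apply: eq_possible_arrangement arr => j; rewrite permKV.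
Qed.

End Achievable.

Theorem theorem17 (R : realType) (d : nat) (hd : (1 <= d)%N) :
  (* (1) direct sum *)
  (forall (n k : nat) (p1 : 'S_n) (p2 : 'S_k) (q : 'S_(n + k)),
      achievable R d p1 -> achievable R d p2 ->
      (forall i : 'I_n, q (lshift k i) = lshift k (p1 i)) ->
      (forall j : 'I_k, q (rshift n j) = rshift n (p2 j)) ->
      achievable R d q) /\
  (* (2) inflating the entry x (0-indexed x0, at position pos) into x, x+1 *)
  (forall (n : nat) (p : 'S_n) (x0 pos : 'I_n) (q : 'S_n.+1),
      achievable R d p -> p pos = x0 ->
      (forall i : 'I_n, (i < pos)%N ->
          (q (widen_ord (leqnSn n) i) : nat) = bump x0 (p i)) ->
      (q (widen_ord (leqnSn n) pos) : nat) = x0 ->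
      (q (lift ord0 pos) : nat) = x0.+1 ->
      (forall i : 'I_n, (pos < i)%N ->
          (q (lift ord0 i) : nat) = bump x0 (p i)) ->
      achievable R d q) /\
  (* (3) inverse *)
  (forall (m : nat) (p : 'S_m), achievable R d p -> achievable R d (p^-1)%g).
Proof.
split; first exact: achievable_concat.
split; [exact: achievable_inflate | exact: achievable_inv].
Qed.
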